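(* Let $\mathcal A$ be a $\sigma$-structure with universe $A$ and let $\mathfrak C$ be the class of all $(\sigma\cup\sigma_A)$-structures $\mathcal C$ for which $\{P_a^{\mathcal C}: a\in A\}$ is a partition of the universe of $\mathcal C$. Then $\mathsf d_{\mathcal A}=\Omega(\mathsf d_{\mathcal A^{\mathrm{id}},\mathfrak C})$.
   Context: $\sigma_A=\{P_a: a\in A\}$ is a set of new unary relation symbols, and the individualisation $\mathcal A^{\mathrm{id}}$ is the $(\sigma\cup\sigma_A)$-expansion of $\mathcal A$ with $P_a^{\mathcal A^{\mathrm{id}}}=\{a\}$. For structures $\mathcal A,\mathcal B$, $\mathsf d(\mathcal A,\mathcal B)$ is the minimum size $\|C\|$ (number of gates plus wires) of a d-representation $C$ of $\operatorname{Hom}(\mathcal A,\mathcal B)$; for a class $\mathfrak C$, $\mathsf d_{\mathcal A,\mathfrak C}(m)=\max\{\mathsf d(\mathcal A,\mathcal C):\mathcal C\in\mathfrak C,\|\mathcal C\|\le m\}$ with $\|\mathcal C\|=\sum_R|R^{\mathcal C}|$, and $\mathsf d_{\mathcal A}$ abbreviates $\mathsf d_{\mathcal A,\mathfrak C}$ for $\mathfrak C$ the class of all structures of the signature of $\mathcal A$. All structures are assumed connected. A factorisation circuit $C$ for finite sets $A,B$ is a finite directed acyclic graph with a unique sink $s$; input gates (no incoming edges) are labelled $\{a\mapsto b\}$, other nodes $\cup$ or $\times$; $\operatorname{dom}(g)$ is $\{a\}$ for an input gate and the union of the children's domains otherwise; $C$ is well-defined if each $\cup$-gate has the same domain as each child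 and children of each $\times$-gate have pairwise disjoint domains; then $S_g=\{\{a\mapsto b\}\}$ for inputs, the union of the children's sets for $\cup$-gates, and $\{h_1\cup\dots\cup h_r:h_i\in S_{g_i}\}$ for $\times$-gates, $S_C=S_s$. A d-representation of $\operatorname{Hom}(\mathcal A,\mathcal B)$ is a well-defined factorisation circuit with $S_C=\operatorname{Hom}(\mathcal A,\mathcal B)$. *)

From Stdlib Require Import ClassicalEpsilon.
From mathcomp Require Import all_boot.


(* minimum of {k | P k}; 0 if the set is empty *)
Definition nat_min (P : nat -> Prop) : nat :=
  epsilon (inhabits 0%N)
    (fun n => (P n /\ forall k, P k -> n <= k) \/ ((forall k, ~ P k) /\ n = 0%N)).

(* maximum (= least upper bound) of {k | P k}; 0 if the set is empty *)
Definition nat_max (P : nat -> Prop) : nat :=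
  epsilon (inhabits 0%N)
    (fun n => (forall k, P k -> k <= n) /\
              (forall u, (forall k, P k -> k <= u) -> n <= u)).

Record structure (sym : finType) (ar : sym -> nat) := Structure {
  univ : finType;
  interp : forall R : sym, {set (ar R).-tuple univ}
}.
Arguments structure {sym} ar.
Arguments Structure {sym ar} univ interp.
Arguments univ {sym ar} s.
Arguments interp {sym ar} s R.

Definition ssize {sym : finType} {ar : sym -> nat} (C : structure ar) : nat :=
  \sum_(R : sym) #|interp C R|.

Definition gaifman {sym : finType} {ar : sym -> nat} (C : structure ar)
  : rel (univ C) :=
  fun x y => (x != y) &&
    [exists R : sym, exists t in interp C R, (x \in (t : seq _)) && (y \in (t : seq _))].

Definition connected {sym : finType} {ar : sym -> nat} (C : structure ar) : Prop :=
  forall x y : univ C, connect (gaifman C) x y.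

Definition is_hom {sym : finType} {ar : sym -> nat} (A B : structure ar)
  (f : univ A -> univ B) : bool :=
  [forall R : sym, forall t in interp A R, map_tuple f t \in interp B R].

(* Hom(A,B), as a set of (total) partial maps univ A -> option (univ B) *)
Definition homs {sym : finType} {ar : sym -> nat} (A B : structure ar)
  : {set {ffun univ A -> option (univ B)}} :=
  [set h | [exists f : {ffun univ A -> univ B},
              is_hom A B f && (h == [ffun x => Some (f x)])]].

(* P_a (= inr a) unary with P_a^{A^id} = {a}.                          *)

Definition ar_id {sym : finType} (ar : sym -> nat) (U : finType)
  (R : sym + U) : nat :=
  match R with inl R' => ar R' | inr _ => 1%N end.

Definition indiv {sym : finType} {ar : sym -> nat} (A : structure ar)
  : structure (ar_id ar (univ A)) :=
  @Structure _ (ar_id ar (univ A)) (univ A)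
    (fun R => match R as R0 return {set (ar_id ar (univ A) R0).-tuple (univ A)} with
              | inl R' => interp A R'
              | inr a => [set [tuple a]]
              end).

Definition Pset {sym : finType} {ar : sym -> nat} {U : finType}
  (C : structure (ar_id ar U)) (a : U) : {set univ C} :=
  [set x | [tuple x] \in interp C (inr a)].

Definition P_partition {sym : finType} {ar : sym -> nat} {U : finType}
  (C : structure (ar_id ar U)) : Prop :=
  (forall a, Pset C a != set0) /\
  (forall a a', a != a' -> [disjoint Pset C a & Pset C a']) /\
  (forall x : univ C, exists a, x \in Pset C a).

Inductive glabel (A B : Type) := GIn of A & B | GUnion | GProd.
Arguments GIn {A B} _ _. Arguments GUnion {A B}. Arguments GProd {A B}.

(* gates are 'I_cn; a wire u -> g (u is a child of g) is cedge u g *)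
Record circuit (A B : finType) := Circuit {
  cn : nat;
  clab : 'I_cn -> glabel A B;
  cedge : rel 'I_cn
}.
Arguments Circuit {A B} cn clab cedge.
Arguments cn {A B} c.
Arguments clab {A B} c _.
Arguments cedge {A B} c _ _.

Definition csize {A B : finType} (C : circuit A B) : nat :=
  (cn C + #|[set p : 'I_(cn C) * 'I_(cn C) | cedge C p.1 p.2]|)%N.

Definition is_sink {A B : finType} (C : circuit A B) (s : 'I_(cn C)) : bool :=
  [forall v, ~~ cedge C s v].

Definition is_input_label {A B : Type} (l : glabel A B) : bool :=
  if l is GIn _ _ then true else false.

Definition circuit_wf {A B : finType} (C : circuit A B) : Prop :=
  (forall u v, cedge C u v -> ~~ connect (cedge C) v u) /\
  (exists s, is_sink C s /\ forall t, is_sink C t -> t = s) /\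
  (forall g, is_input_label (clab C g) = [forall u, ~~ cedge C u g]).

Definition pfun (A B : finType) := {ffun A -> option B}.

(* dom and S satisfy the defining recursive equations (which have a unique
   solution, C being acyclic) *)
Definition circuit_sem {A B : finType} (C : circuit A B)
  (dom : 'I_(cn C) -> {set A}) (S : 'I_(cn C) -> {set pfun A B}) : Prop :=
  forall g, match clab C g with
  | GIn a b => dom g = [set a] /\
               S g = [set [ffun x => if x == a then Some b else None]]
  | GUnion => dom g = \bigcup_(u | cedge C u g) dom u /\
              S g = \bigcup_(u | cedge C u g) S u
  | GProd => dom g = \bigcup_(u | cedge C u g) dom u /\
             forall h, h \in S g <->
               exists F : 'I_(cn C) -> pfun A B,
                 (forall u, cedge C u g -> F u \in S u) /\
                 (forall a b, h a = Some b <-> exists u, cedge C u g /\ F u a = Some b)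
  end.

Definition circuit_welldef {A B : finType} (C : circuit A B)
  (dom : 'I_(cn C) -> {set A}) : Prop :=
  forall g, match clab C g with
  | GUnion => forall u, cedge C u g -> dom u = dom g
  | GProd => forall u v, cedge C u g -> cedge C v g -> u != v ->
                         [disjoint dom u & dom v]
  | GIn _ _ => True
  end.

Definition is_drep {A B : finType} (C : circuit A B) (X : {set pfun A B}) : Prop :=
  circuit_wf C /\
  exists dom S, circuit_sem C dom S /\ circuit_welldef C dom /\
    forall s, is_sink C s -> S s = X.

Definition dsize {sym : finType} {ar : sym -> nat} (A B : structure ar) : nat :=
  nat_min (fun k => exists C : circuit (univ A) (univ B),
                      is_drep C (homs A B) /\ csize C = k).

Definition dclass {sym : finType} {ar : sym -> nat} (A : structure ar)
  (Cls : structure ar -> Prop) (m : nat) : nat :=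
  nat_max (fun k => exists C : structure ar, Cls C /\ ssize C <= m /\ k = dsize A C).

(* all (connected) sigma-structures *)
Definition all_structs {sym : finType} {ar : sym -> nat} (C : structure ar) : Prop :=
  connected C.

Definition partition_class {sym : finType} {ar : sym -> nat} {U : finType}
  (C : structure (ar_id ar U)) : Prop :=
  connected C /\ P_partition C.

Definition big_Omega (f g : nat -> nat) : Prop :=
  exists k : nat, (0 < k)%N /\ exists m0, forall m, m0 <= m -> g m <= k * f m.

From Stdlib Require Import ClassicalEpsilon Classical.
From mathcomp Require Import all_boot.

Set Implicit Arguments. Unset Strict Implicit. Unset Printing Implicit Defensive.

(* A homomorphism A^id -> C is a homomorphism A -> C|sigma sending every a into P_a,
   so Hom(A^id, C) is cut out of Hom(A, C|sigma) by a constraint on single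
   values.  In a d-representation of a set of maps, intersecting every gate's set with such a
   constraint keeps all circuit equations valid; pruning the gates whose set becomes empty
   (and those that no longer reach the sink) leaves a d-representation of the constrained set
   that is no larger.  Hence d(A^id, C) <= d(A, C|sigma), and C|sigma is connected with
   ||C|sigma|| <= ||C||, which gives the claim with constant 1; the maximum defining d_A(m)
   exists since Hom(A, B) has a d-representation (one product of input gates per
   homomorphism) of size polynomial in ||B||. *)

Lemma ex_least (P : nat -> Prop) k : P k -> exists2 n, P n & forall j, P j -> n <= j.
Proof.
move=> Pk; pose p n : bool := excluded_middle_informative (P n).
have pP n : reflect (P n) (p n).
  by rewrite /p; case: excluded_middle_informative => /= H; constructor.
have [n /pP Pn nmin] := find_ex_minn (ex_intro p k (introT (pP k) Pk)).
by exists n => // j /pP /nmin.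
Qed.

Lemma nat_min_spec (P : nat -> Prop) k : P k -> P (nat_min P) /\ nat_min P <= k.
Proof.
move=> Pk; have [n Pn nmin] := ex_least Pk.
have [|[Pm mmin]|[nP _]] := epsilon_spec (inhabits 0%N)
    (fun n => (P n /\ forall k, P k -> n <= k) \/ ((forall k, ~ P k) /\ n = 0%N)).
- by exists n; left.
- by split; [|apply: mmin].
- by case: (nP _ Pk).
Qed.

Lemma nat_min_empty (P : nat -> Prop) : (forall k, ~ P k) -> nat_min P = 0.
Proof.
move=> nP; have [|[Pm _]|[_ //]] := epsilon_spec (inhabits 0%N)
    (fun n => (P n /\ forall k, P k -> n <= k) \/ ((forall k, ~ P k) /\ n = 0%N)).
- by exists 0; right.
- by case: (nP _ Pm).
Qed.

Lemma nat_max_spec (P : nat -> Prop) u : (forall k, P k -> k <= u) ->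
  (forall k, P k -> k <= nat_max P) /\ (forall v, (forall k, P k -> k <= v) -> nat_max P <= v).
Proof.
move=> ub; have [n Pn nmin] := ex_least (P := fun v => forall k, P k -> k <= v) ub.
have := epsilon_spec (inhabits 0%N) (fun n => (forall k, P k -> k <= n) /\
  (forall u, (forall k, P k -> k <= u) -> n <= u)).
by rewrite -/(nat_max P); apply; exists n.
Qed.

Lemma le_nat_max (P : nat -> Prop) u k : (forall j, P j -> j <= u) -> P k -> k <= nat_max P.
Proof. by move=> /nat_max_spec [ub _]; apply: ub. Qed.

Lemma nat_max_le (P : nat -> Prop) v : (forall k, P k -> k <= v) -> nat_max P <= v.
Proof. by move=> ub; apply: (nat_max_spec ub).2. Qed.

(* The circuit notions of the definitions, for gates ranging over an arbitrary finite type,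
   so that circuits can be built on convenient gate types and then renumbered *)
Section GateCircuits.
Variables (A B G : finType) (lab : G -> glabel A B) (e : rel G).

Definition acyclic : Prop := forall u v, e u v -> ~~ connect e v u.

Definition gsink (s : G) : bool := [forall v, ~~ e s v].

Definition gwf : Prop :=
  acyclic /\ (exists s, gsink s /\ forall t, gsink t -> t = s) /\
  (forall g, is_input_label (lab g) = [forall u, ~~ e u g]).

Definition gsem (dom : G -> {set A}) (S : G -> {set pfun A B}) : Prop :=
  forall g, match lab g with
  | GIn a b => dom g = [set a] /\
               S g = [set [ffun x => if x == a then Some b else None]]
  | GUnion => dom g = \bigcup_(u | e u g) dom u /\
              S g = \bigcup_(u | e u g) S u
  | GProd => dom g = \bigcup_(u | e u g) dom u /\
             forall h, h \in S g <->
               exists F : G -> pfun A B,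
                 (forall u, e u g -> F u \in S u) /\
                 (forall a b, h a = Some b <-> exists u, e u g /\ F u a = Some b)
  end.

Definition gwelldef (dom : G -> {set A}) : Prop :=
  forall g, match lab g with
  | GUnion => forall u, e u g -> dom u = dom g
  | GProd => forall u v, e u g -> e v g -> u != v -> [disjoint dom u & dom v]
  | GIn _ _ => True
  end.

Definition gdrep (X : {set pfun A B}) : Prop :=
  gwf /\ exists dom S, gsem dom S /\ gwelldef dom /\ forall s, gsink s -> S s = X.

Definition gsize : nat := #|G| + #|[set p : G * G | e p.1 p.2]|.

End GateCircuits.

Lemma is_drepE (A B : finType) (C : circuit A B) X : is_drep C X = gdrep (clab C) (cedge C) X.
Proof. by []. Qed.

Lemma csizeE (A B : finType) (C : circuit A B) : csize C = gsize (cedge C).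
Proof. by rewrite /csize /gsize card_ord. Qed.

Section Pullback.
Variables (G G' : finType) (e : rel G) (f : G' -> G).

Lemma connect_pullback x y :
  connect (fun x y => e (f x) (f y)) x y -> connect e (f x) (f y).
Proof.
move=> /connectP [p pp ->]; elim: p x pp => [|z p IH] x /=; first by rewrite connect0.
by move=> /andP [exz pz]; apply: connect_trans (connect1 exz) (IH _ pz).
Qed.

Lemma acyclic_pullback : acyclic e -> acyclic (fun x y => e (f x) (f y)).
Proof. by move=> ac u v /ac; apply: contra => /connect_pullback. Qed.

Lemma gsize_pullback : injective f -> gsize (fun x y => e (f x) (f y)) <= gsize e.
Proof.
move=> finj; apply: leq_add; first exact: leq_card finj.
rewrite -(card_imset _ (f := fun p : G' * G' => (f p.1, f p.2))); last first.
  by move=> [x y] [x' y'] /= [/finj -> /finj ->].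
by apply: subset_leq_card; apply/subsetP => _ /imsetP [[x y] /[!inE] exy ->].
Qed.

End Pullback.

Section Relabel.
Variables (A B G G' : finType) (lab : G -> glabel A B) (e : rel G).
Variables (f : G' -> G) (g : G -> G') (fK : cancel f g) (gK : cancel g f).

Let forall_relabel (P : pred G) : [forall u, P (f u)] = [forall w, P w].
Proof. by apply/forallP/forallP => H w; [rewrite -(gK w) | ]; apply: H. Qed.

Lemma gwf_relabel : gwf lab e -> gwf (lab \o f) (fun x y => e (f x) (f y)).
Proof.
have sinkE x : gsink (fun x y => e (f x) (f y)) x = gsink e (f x).
  exact: (forall_relabel (fun w => ~~ e (f x) w)).
move=> [ac [[s [ss su]] inp]]; split; first exact: acyclic_pullback.
split; last by move=> x /=; rewrite inp (forall_relabel (fun w => ~~ e w (f x))).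
exists (g s); split; first by rewrite sinkE gK.
by move=> t; rewrite sinkE => /su <-; rewrite fK.
Qed.

Lemma gsem_relabel dom S :
  gsem lab e dom S -> gsem (lab \o f) (fun x y => e (f x) (f y)) (dom \o f) (S \o f).
Proof.
have fbij : bijective f by exists g.
move=> sem x /=; move: (sem (f x)); case: (lab (f x)) => [a b||] //.
  by rewrite !(reindex f (onW_bij _ fbij)).
move=> [-> prodS]; split; first by rewrite !(reindex f (onW_bij _ fbij)).
move=> h; rewrite prodS; split => -[F [FS hF]].
  exists (F \o f); split=> [u|a b]; first exact: FS.
  rewrite hF; split=> -[u [eu Fu]]; first by exists (g u); rewrite /= gK.
  by exists (f u).
exists (F \o g); split=> [u eu|a b]; first by have := FS (g u); rewrite /= gK; apply.
rewrite hF; split=> -[u [eu Fu]]; first by exists (f u); rewrite /= fK.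
by exists (g u); rewrite gK.
Qed.

Lemma gwelldef_relabel dom :
  gwelldef lab e dom -> gwelldef (lab \o f) (fun x y => e (f x) (f y)) (dom \o f).
Proof.
move=> wd x /=; move: (wd (f x)); case: (lab (f x)) => [a b||] //; first by move=> H u /H.
move=> H u v eu ev nuv; apply: H eu ev _.
by apply: contra nuv => /eqP /(can_inj fK) ->.
Qed.

Lemma gdrep_relabel X : gdrep lab e X -> gdrep (lab \o f) (fun x y => e (f x) (f y)) X.
Proof.
move=> [wf [dom [S [sem [wd sink]]]]]; split; first exact: gwf_relabel.
exists (dom \o f), (S \o f); split; first exact: gsem_relabel.
split; first exact: gwelldef_relabel.
move=> t /forallP ts; apply: sink; apply/forallP => w.
by rewrite -(gK w); apply: ts.
Qed.

End Relabel.

Lemma gdrep_circuit (A B G : finType) (lab : G -> glabel A B) (e : rel G) X :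
  gdrep lab e X -> exists C : circuit A B, is_drep C X /\ csize C <= gsize e.
Proof.
move=> rep; exists (Circuit #|G| (lab \o enum_val) (fun i j => e (enum_val i) (enum_val j))).
rewrite is_drepE csizeE; split; first exact: (gdrep_relabel (@enum_valK G) (@enum_rankK G) rep).
exact/gsize_pullback/enum_val_inj.
Qed.

Lemma acyclic_ind (G : finType) (e : rel G) (P : G -> Prop) : acyclic e ->
  (forall g, (forall u, e u g -> P u) -> P g) -> forall g, P g.
Proof.
move=> ac IH g; have [n] := ubnP #|[set u | connect e u g]|.
elim: n g => // n IHn g Hn; apply: IH => u eu; apply: IHn.
rewrite -ltnS; apply: leq_trans Hn; rewrite ltnS; apply: proper_card; apply/properP; split.
  by apply/subsetP => x; rewrite !inE => cxu; apply: connect_trans cxu (connect1 eu).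
by exists g; rewrite !inE ?connect0 //; apply: ac.
Qed.

Lemma glue_pfun (I A B : finType) (P : pred I) (F : I -> pfun A B) :
  (forall i j a, P i -> P j -> F i a != None -> F j a != None -> i = j) ->
  exists h : pfun A B, forall a b, h a = Some b <-> exists i, P i /\ F i a = Some b.
Proof.
move=> disj.
exists [ffun a => if [pick i | P i && (F i a != None)] is Some i then F i a else None].
move=> a b; rewrite ffunE; split; first by case: pickP => [i /andP [Pi _] Fi|_ //]; exists i.
move=> [i [Pi Fi]]; case: pickP => [j /andP [Pj nj]|/(_ i)]; last by rewrite Pi Fi.
by rewrite (disj j i a) // Fi.
Qed.

Section Semantics.
Variables (A B G : finType) (lab : G -> glabel A B) (e : rel G).
Variables (dom : G -> {set A}) (S : G -> {set pfun A B}).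
Hypotheses (ac : acyclic e) (inp : forall g, is_input_label (lab g) = [forall u, ~~ e u g]).
Hypotheses (sem : gsem lab e dom S) (wd : gwelldef lab e dom).

Lemma gate_has_child g : ~~ is_input_label (lab g) -> exists u, e u g.
Proof. by rewrite inp => /forallPn [u /negPn eu]; exists u. Qed.

Lemma gate_inhabited : G -> inhabited A.
Proof.
apply: (acyclic_ind ac) => g IH; case E: (lab g) => [a b||]; first exact: inhabits a;
  by have [u /IH] : exists u, e u g by apply: gate_has_child; rewrite E.
Qed.

Lemma gsem_support g h a : h \in S g -> (h a != None) = (a \in dom g).
Proof.
move: g h; apply: (acyclic_ind ac) => g IH h; move: (sem g) (wd g); case: (lab g) => [a' b||].
- by move=> [-> ->] _ /set1P ->; rewrite ffunE in_set1; case: (a == a').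
- by move=> [_ ->] wdg /bigcupP [u eu hu]; rewrite (IH u eu h hu) (wdg u eu).
move=> [-> prodS] _ /prodS [F [FS hF]]; apply/idP/bigcupP.
  case ha: (h a) => [b|] // _; have [u [eu Fu]] := (hF a b).1 ha.
  by exists u => //; rewrite -(IH u eu _ (FS u eu)) Fu.
move=> [u eu]; rewrite -(IH u eu _ (FS u eu)); case Fu: (F u a) => [b|] // _.
by rewrite ((hF a b).2 _) //; exists u.
Qed.

Lemma gsem_nonempty g : S g != set0.
Proof.
move: g; apply: (acyclic_ind ac) => g IH; have := @gate_has_child g.
move: (sem g) (wd g); case: (lab g) => [a b||] /=.
- by move=> [_ ->] _ _; apply/set0Pn; eexists; apply: set11.
- move=> [_ ->] _ [//|u eu]; have [h hu] := set0Pn _ (IH u eu).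
  by apply/set0Pn; exists h; apply/bigcupP; exists u.
move=> [_ prodS] wdg _.
pose F u := odflt [ffun _ => None] [pick h in S u].
have FS u : e u g -> F u \in S u.
  by move=> /IH /set0Pn [h hu]; rewrite /F; case: pickP => [//|/(_ h)]; rewrite hu.
have [|h hF] := @glue_pfun _ _ _ (e ^~ g) F.
  move=> u v a eu ev; rewrite !(gsem_support a (FS _ _)) // => au av.
  apply/eqP; apply: contraT => /(wdg _ _ eu ev) /disjointFr /(_ au).
  by rewrite av.
by apply/set0Pn; exists h; apply/prodS; exists F.
Qed.

End Semantics.

Lemma gdrep_inhabited (A B G : finType) (lab : G -> glabel A B) e X :
  gdrep lab e X -> inhabited A.
Proof.
by move=> [[ac [[s _] inp]] _]; apply: gate_inhabited ac inp s.
Qed.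

Lemma gdrep_nonempty (A B G : finType) (lab : G -> glabel A B) e X :
  gdrep lab e X -> X != set0.
Proof.
move=> [[ac [[s [ss _]] inp]] [dom [S [sem [wd sink]]]]].
by rewrite -(sink _ ss); apply: gsem_nonempty ac inp sem wd s.
Qed.

(* [n * k + n.+1] gates and at most its square many wires *)
Definition triv_bound (n k : nat) : nat := (n * k + n.+1) + (n * k + n.+1) ^ 2.

Section TrivialCircuit.
Variables (A B : finType) (X : {set pfun A B}) (a0 : A) (h0 : pfun A B).
Hypotheses (h0X : h0 \in X) (totX : forall h a, h \in X -> h a != None).

Local Notation map := {h | h \in X}.
Local Notation gate := ((map * A) + option map)%type.

(* one input gate {a |-> h a} per pair (h, a), one product gate per h, a union sink;
   the [GUnion] case of an input gate never occurs since the maps in X are total *)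
Definition triv_lab (x : gate) : glabel A B :=
  match x with
  | inl (h, a) => if val h a is Some b then GIn a b else GUnion
  | inr (Some _) => GProd
  | inr None => GUnion
  end.

Definition triv_edge : rel gate := fun x y =>
  match x, y with
  | inl (h, _), inr (Some h') => h == h'
  | inr (Some _), inr None => true
  | _, _ => false
  end.

Definition triv_dom (x : gate) : {set A} := if x is inl (_, a) then [set a] else setT.

Definition restrict1 (h : map) (a : A) : pfun A B := [ffun y => if y == a then val h a else None].

Definition triv_sem (x : gate) : {set pfun A B} :=
  match x with
  | inl (h, a) => [set restrict1 h a]
  | inr (Some h) => [set val h]
  | inr None => X
  end.

Let total_map (h : map) a : exists b, val h a = Some b.
Proof. by case E: (val h a) => [b|]; [exists b | move: (totX a (valP h)); rewrite E]. Qed.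

Lemma triv_acyclic : acyclic triv_edge.
Proof.
pose triv_level (x : gate) := match x with inl _ => 0 | inr (Some _) => 1 | inr None => 2 end.
have lt_level x y : triv_edge x y -> triv_level x < triv_level y.
  by case: x => [[h a]|[h|]]; case: y => [[h' a']|[h'|]].
have le_level x y : connect triv_edge x y -> triv_level x <= triv_level y.
  move/connectP=> [p pp ->]; elim: p x pp => [|z p IH] x //= /andP [exz pz].
  exact: leq_trans (ltnW (lt_level _ _ exz)) (IH _ pz).
by move=> u v euv; apply/negP => /le_level; rewrite leqNgt lt_level.
Qed.

Lemma triv_sink x : gsink triv_edge x -> x = inr None.
Proof.
move: x => [[h a]|[h|]] //= /forallP sink; first by move: (sink (inr (Some h))); rewrite /= eqxx.
by move: (sink (inr None)).
Qed.

Lemma triv_gwf : gwf triv_lab triv_edge.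
Proof.
split; first exact: triv_acyclic.
split; first by exists (inr None); split; [apply/forallP => -[[h a]|[h|]] | apply: triv_sink].
move=> [[h a]|[h|]] /=.
- by have [b ->] := total_map h a; apply/esym/forallP => -[[h' a']|[h'|]].
- by apply/esym/forallPn; exists (inl (h, a0)); rewrite /= eqxx.
- by apply/esym/forallPn; exists (inr (Some (Sub h0 h0X))).
Qed.

Lemma triv_gsem_prod (h : map) (h' : pfun A B) : h' \in [set val h] <->
  exists F : gate -> pfun A B, (forall u, triv_edge u (inr (Some h)) -> F u \in triv_sem u) /\
    (forall a b, h' a = Some b <-> exists u, triv_edge u (inr (Some h)) /\ F u a = Some b).
Proof.
split.
  move=> /set1P ->.
  exists (fun u => if u is inl (h1, a1) then restrict1 h1 a1 else [ffun _ => None]).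
  split; first by move=> [[h1 a1]|[h1|]] //= _; rewrite inE.
  move=> a b; split; first by move=> E; exists (inl (h, a)); rewrite /= eqxx ffunE eqxx.
  move=> [[[h1 a1]|[h1|]] [eu Fu]] //=; move/eqP: eu Fu => -> /=.
  by rewrite ffunE; case: eqP => [->|].
move=> [F [FS hF]]; apply/set1P/ffunP => a.
have [b E] := total_map h a; rewrite E; apply/hF.
exists (inl (h, a)); split; first by rewrite /= eqxx.
by move: (FS (inl (h, a)) (eqxx _)) => /set1P ->; rewrite ffunE eqxx.
Qed.

Lemma triv_gsem : gsem triv_lab triv_edge triv_dom triv_sem.
Proof.
move=> [[h a]|[h|]] /=.
- by have [b E] := total_map h a; rewrite E /restrict1 E.
- split; last exact: triv_gsem_prod.
  apply/setP => x; rewrite inE; apply/esym/bigcupP.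
  by exists (inl (h, x)); rewrite /= ?eqxx ?inE.
- split.
    apply/setP => x; rewrite inE; apply/esym/bigcupP.
    by exists (inr (Some (Sub h0 h0X))); rewrite ?inE.
  apply/setP => h; apply/idP/bigcupP => [hX|[[[h1 a1]|[h1|]] //= _ /set1P ->]]; last exact: valP.
  by exists (inr (Some (Sub h hX))); rewrite //= inE.
Qed.

Lemma triv_gwelldef : gwelldef triv_lab triv_edge triv_dom.
Proof.
move=> [[h a]|[h|]] /=.
- by have [b ->] := total_map h a.
- move=> [[h1 a1]|[h1|]] // [[h2 a2]|[h2|]] //= /eqP <- /eqP <- neq.
  by rewrite disjoints1 inE; apply: contra neq => /eqP ->.
- by move=> [[h1 a1]|[h1|]].
Qed.

Lemma triv_gdrep : gdrep triv_lab triv_edge X.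
Proof.
split; first exact: triv_gwf.
exists triv_dom, triv_sem; split; first exact: triv_gsem.
split; first exact: triv_gwelldef.
by move=> x /triv_sink ->.
Qed.

Lemma triv_gsize : gsize triv_edge <= triv_bound #|X| #|A|.
Proof.
have cardG : #|{: gate}| = #|X| * #|A| + #|X|.+1.
  by rewrite card_sum card_prod card_option card_sig.
rewrite /gsize cardG leq_add2l.
by rewrite (leq_trans (max_card _)) // card_prod cardG expnS expn1.
Qed.

End TrivialCircuit.

Section Pruning.
Variables (A B G : finType) (lab : G -> glabel A B) (e : rel G).
Variables (dom : G -> {set A}) (S : G -> {set pfun A B}).

(* [gsem] with input gates allowed to represent the empty set *)
Definition gsem_sub : Prop :=
  forall g, match lab g with
  | GIn a b => dom g = [set a] /\
               S g \subset [set [ffun x => if x == a then Some b else None]]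
  | GUnion => dom g = \bigcup_(u | e u g) dom u /\
              S g = \bigcup_(u | e u g) S u
  | GProd => dom g = \bigcup_(u | e u g) dom u /\
             forall h, h \in S g <->
               exists F : G -> pfun A B,
                 (forall u, e u g -> F u \in S u) /\
                 (forall a b, h a = Some b <-> exists u, e u g /\ F u a = Some b)
  end.

Variable s : G.
Hypotheses (ac : acyclic e) (ss : gsink e s).
Hypotheses (inp : forall g, is_input_label (lab g) = [forall u, ~~ e u g]).
Hypotheses (sem : gsem_sub) (wd : gwelldef lab e dom) (Ss : S s != set0).

Definition alive (g : G) : bool := S g != set0.

(* Gates whose parents are all dead would become new sinks, hence the reachability condition *)
Definition good (g : G) : bool :=
  alive g && connect [rel u v | [&& e u v, alive u & alive v]] g s.

Lemma alive_prod_child g u : lab g = GProd -> alive g -> e u g -> alive u.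
Proof.
move=> E /set0Pn [h hg] eu; move: (sem g); rewrite E => -[_ /(_ h) [/(_ hg) [F [FS _]] _]].
by apply/set0Pn; exists (F u); apply: FS.
Qed.

Lemma alive_union_child g : lab g = GUnion -> alive g -> exists2 u, e u g & alive u.
Proof.
move=> E /set0Pn [h]; move: (sem g); rewrite E => -[_ ->] /bigcupP [u eu hu].
by exists u => //; apply/set0Pn; exists h.
Qed.

Lemma good_s : good s.
Proof. by rewrite /good /alive Ss connect0. Qed.

Lemma good_child g u : good g -> e u g -> alive u -> good u.
Proof.
move=> /andP [ag cg] eu au; rewrite /good au /=.
by apply: connect_trans cg; apply: connect1; rewrite /= eu au ag.
Qed.

Lemma good_prod_child g u : lab g = GProd -> good g -> e u g -> good u.
Proof.
move=> E gg eu; apply: (good_child gg eu); apply: (alive_prod_child E _ eu).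
by case/andP: gg.
Qed.

Lemma good_has_good_child g u : good g -> e u g -> exists2 v, e v g & good v.
Proof.
move=> gg eu; have ag : alive g by case/andP: gg.
move: (inp g); case E: (lab g) => [a b||] /=.
- by move=> /esym /forallP /(_ u); rewrite eu.
- move=> _; have [v ev av] := alive_union_child E ag.
  by exists v => //; apply: good_child gg ev av.
- by move=> _; exists u => //; apply: good_prod_child E gg eu.
Qed.

Local Notation pruned := {g | good g}.
Local Notation pruned_edge := (fun x y : pruned => e (val x) (val y)).

Lemma pruned_sink (t : pruned) : gsink pruned_edge t -> val t = s.
Proof.
move=> /forallP tsink; apply/eqP; apply: contraT => nts.
have /andP [_ /connectP [[|v p] /= pp ets]] := valP t; first by rewrite ets eqxx in nts.
move: pp => /andP [/andP [etv /andP [_ av]] pp].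
have gv : good v by rewrite /good av; apply/connectP; exists p.
by move: (tsink (Sub v gv)); rewrite SubK etv.
Qed.

Lemma pruned_gwf : gwf (lab \o val) pruned_edge.
Proof.
split; first exact: acyclic_pullback.
split.
  exists (Sub s good_s); split; first by apply/forallP => v; rewrite SubK; move/forallP: ss.
  by move=> t /pruned_sink st; apply: val_inj; rewrite SubK.
move=> g /=; rewrite inp; apply/forallP/forallP => nochild u; first exact: nochild.
apply/negP => eug; have [v ev gv] := good_has_good_child (valP g) eug.
by move: (nochild (Sub v gv)); rewrite SubK ev.
Qed.

Lemma pruned_union (g : pruned) : lab (val g) = GUnion ->
  dom (val g) = \bigcup_(u : pruned | e (val u) (val g)) dom (val u) /\
  S (val g) = \bigcup_(u : pruned | e (val u) (val g)) S (val u).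
Proof.
move=> E; have gg := valP g; have ag : alive (val g) by case/andP: gg.
have wdg := wd (val g); rewrite E in wdg.
move: (sem (val g)); rewrite E => -[_ ->].
have [u0 eu0 au0] := alive_union_child E ag.
split.
  apply/setP => x; apply/idP/bigcupP => [xg|[u eu]]; last by rewrite (wdg _ eu).
  by exists (Sub u0 (good_child gg eu0 au0)); rewrite SubK ?(wdg _ eu0).
apply/setP => h; apply/bigcupP/bigcupP => -[u eu hu]; last by exists (val u).
have au : alive u by apply/set0Pn; exists h.
by exists (Sub u (good_child gg eu au)); rewrite SubK.
Qed.

Lemma pruned_prod (g : pruned) : lab (val g) = GProd ->
  dom (val g) = \bigcup_(u : pruned | e (val u) (val g)) dom (val u) /\
  forall h, h \in S (val g) <->
    exists F : pruned -> pfun A B,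
      (forall u, e (val u) (val g) -> F u \in S (val u)) /\
      (forall a b, h a = Some b <-> exists u, e (val u) (val g) /\ F u a = Some b).
Proof.
move=> E; have gch u : e u (val g) -> good u := good_prod_child E (valP g).
move: (sem (val g)); rewrite E => -[domg prodS]; split.
  rewrite domg; apply/setP => x; apply/bigcupP/bigcupP => -[u eu xu]; last by exists (val u).
  by exists (Sub u (gch _ eu)); rewrite SubK.
move=> h; rewrite prodS; split => -[F [FS hF]].
  exists (F \o val); split => [u|a b]; first exact: FS.
  rewrite hF; split => -[u [eu Fu]]; last by exists (val u).
  by exists (Sub u (gch _ eu)).
pose Fext u := if insub u is Some u' then F u' else [ffun _ => None] : pfun A B.
have FextE (u : pruned) : Fext (val u) = F u by rewrite /Fext valK.
exists Fext; split => [u eu|a b].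
  by have := FS (Sub u (gch _ eu)); rewrite -FextE SubK; apply.
rewrite hF; split => -[u [eu Fu]]; first by exists (val u); rewrite FextE.
by exists (Sub u (gch _ eu)); rewrite -FextE SubK.
Qed.

Lemma pruned_gsem : gsem (lab \o val) pruned_edge (dom \o val) (S \o val).
Proof.
move=> g /=; move: (sem (val g)); case E: (lab (val g)) => [a b||] semg.
- case: semg => domg; rewrite subset1 => /orP [/eqP ->|/eqP S0] //.
  by have /andP [] := valP g; rewrite /alive S0 eqxx.
- exact: pruned_union.
- exact: pruned_prod.
Qed.

Lemma pruned_gwelldef : gwelldef (lab \o val) pruned_edge (dom \o val).
Proof.
move=> g /=; have := wd (val g); case: (lab (val g)) => [a b||] //; first by move=> wdg u /wdg.
move=> wdg u v eu ev nuv; apply: wdg eu ev _.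
by apply: contra nuv => /eqP /val_inj ->.
Qed.

Lemma pruned_circuit : exists C : circuit A B, is_drep C (S s) /\ csize C <= gsize e.
Proof.
have [|C [HC sC]] := gdrep_circuit (lab := lab \o val) (e := pruned_edge) (X := S s).
  split; first exact: pruned_gwf.
  exists (dom \o val), (S \o val); split; first exact: pruned_gsem.
  by split; [exact: pruned_gwelldef | move=> t /pruned_sink <-].
by exists C; split => //; apply: leq_trans sC (gsize_pullback _ val_inj).
Qed.

End Pruning.

Definition respects (A B : finType) (P : A -> B -> bool) (h : pfun A B) : bool :=
  [forall a, if h a is Some b then P a b else true].

Lemma respectsP (A B : finType) (P : A -> B -> bool) (h : pfun A B) :
  reflect (forall a b, h a = Some b -> P a b) (respects P h).
Proof.
apply: (iffP forallP) => H a; first by move=> b ha; move: (H a); rewrite ha.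
by case ha: (h a) => [b|] //; apply: H.
Qed.

Section Restriction.
Variables (A B G : finType) (lab : G -> glabel A B) (e : rel G) (P : A -> B -> bool).

Lemma gsem_sub_respects dom S :
  gsem lab e dom S -> gsem_sub lab e dom (fun g => [set h in S g | respects P h]).
Proof.
move=> sem g; move: (sem g); case: (lab g) => [a b||] [-> semg]; split => //.
- by rewrite semg; apply/subsetP => h; rewrite !inE => /andP [].
- rewrite semg; apply/setP => h; rewrite inE; apply/andP/bigcupP.
    by move=> [/bigcupP [u eu hu] rh]; exists u; rewrite // inE hu.
  by move=> [u eu]; rewrite inE => /andP [hu rh]; split => //; apply/bigcupP; exists u.
move=> h; rewrite inE; split.
  move=> /andP [/semg [F [FS hF]] /respectsP rh]; exists F; split => // u eu.
  rewrite inE FS //=; apply/respectsP => a b Fu.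
  by apply: rh; apply/hF; exists u.
move=> [F [FS hF]]; apply/andP; split.
  by apply/semg; exists F; split => // u /FS; rewrite inE => /andP [].
apply/respectsP => a b /hF [u [eu Fu]].
by have := FS u eu; rewrite inE => /andP [_ /respectsP]; apply.
Qed.

Lemma gdrep_respects X : gdrep lab e X -> [set h in X | respects P h] != set0 ->
  exists C : circuit A B, is_drep C [set h in X | respects P h] /\ csize C <= gsize e.
Proof.
move=> [[ac [[s [ss _]] inp]] [dom [S [sem [wd sink]]]]].
rewrite -(sink s ss) => ne.
exact: (pruned_circuit ac ss inp (gsem_sub_respects sem) wd ne).
Qed.

End Restriction.

Section MinimalSize.
Variables (A B : finType) (X : {set pfun A B}).

Definition drep_of_size (k : nat) : Prop := exists C : circuit A B, is_drep C X /\ csize C = k.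

Definition dmin : nat := nat_min drep_of_size.

Lemma dmin_le (C : circuit A B) : is_drep C X -> dmin <= csize C.
Proof. by move=> HC; apply: (nat_min_spec (P := drep_of_size) _).2; exists C. Qed.

Lemma dmin_attained (C : circuit A B) : is_drep C X -> exists D, is_drep D X /\ csize D = dmin.
Proof. by move=> HC; apply: (nat_min_spec (P := drep_of_size) (k := csize C) _).1; exists C. Qed.

Lemma dmin_no_drep : (forall C : circuit A B, ~ is_drep C X) -> dmin = 0.
Proof. by move=> none; apply: nat_min_empty => k [C [HC _]]; apply: none HC. Qed.

Hypothesis totX : forall h a, h \in X -> h a != None.

Lemma triv_drep_exists : inhabited A -> X != set0 ->
  exists C : circuit A B, is_drep C X /\ csize C <= triv_bound #|X| #|A|.
Proof.
move=> [a0] /set0Pn [h0 h0X].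
have [C [HC sC]] := gdrep_circuit (triv_gdrep a0 h0X totX).
by exists C; split => //; apply: leq_trans sC (triv_gsize X).
Qed.

Lemma dmin_triv : dmin <= triv_bound #|X| #|A|.
Proof.
have [[C0 HC0]|none] := classic (exists C, is_drep C X); last first.
  by rewrite dmin_no_drep // => C HC; apply: none; exists C.
rewrite is_drepE in HC0.
have [C [HC sC]] := triv_drep_exists (gdrep_inhabited HC0) (gdrep_nonempty HC0).
exact: leq_trans (dmin_le HC) sC.
Qed.

End MinimalSize.

Lemma dmin_respects (A B : finType) (X : {set pfun A B}) (P : A -> B -> bool) :
  (forall h a, h \in X -> h a != None) -> dmin [set h in X | respects P h] <= dmin X.
Proof.
move=> totX; set X' := [set h in X | respects P h].
have [[C0 HC0]|none] := classic (exists C, is_drep C X'); last first.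
  by rewrite dmin_no_drep // => C HC; apply: none; exists C.
rewrite is_drepE in HC0; have X'n := gdrep_nonempty HC0.
have Xn : X != set0 by have /set0Pn [h] := X'n; rewrite inE => /andP [hX _]; apply/set0Pn; exists h.
have [T [HT _]] := triv_drep_exists totX (gdrep_inhabited HC0) Xn.
have [D [HD <-]] := dmin_attained HT; rewrite is_drepE in HD.
have [C [HC sC]] := gdrep_respects HD X'n.
by apply: leq_trans (dmin_le HC) _; rewrite (csizeE D).
Qed.

Lemma card_bigcup_le (I T : finType) (P : pred I) (F : I -> {set T}) :
  #|\bigcup_(i | P i) F i| <= \sum_(i | P i) #|F i|.
Proof.
elim/big_rec2: _ => [|i n U _ le]; first by rewrite cards0.
by rewrite (leq_trans (leq_card_setU _ _).1) ?leq_add2l.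
Qed.

Section StructureSize.
Variables (sym : finType) (ar : sym -> nat) (B : structure ar).

Definition tuple_elements : {set univ B} :=
  \bigcup_(R : sym) \bigcup_(t in interp B R) [set x | x \in (t : seq _)].

Lemma card_tuple_elements : #|tuple_elements| <= ssize B * \sum_(R : sym) ar R.
Proof.
rewrite /tuple_elements big_distrr /=; apply: leq_trans (card_bigcup_le _ _) _.
apply: leq_sum => R _; apply: leq_trans (card_bigcup_le _ _) _.
apply: leq_trans (_ : \sum_(t in interp B R) ar R <= _).
  by apply: leq_sum => t _; rewrite cardsE (leq_trans (card_size _)) ?size_tuple.
by rewrite sum_nat_const leq_mul2r /ssize (bigD1 R) //= leq_addr orbT.
Qed.

(* an element outside all tuples is isolated in the Gaifman graph *)
Lemma card_univ_connected : connected B -> #|univ B| <= 1 + ssize B * \sum_(R : sym) ar R.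
Proof.
move=> cB; have [[x xn]|all_in] := classic (exists x, x \notin tuple_elements).
  suff -> : #|univ B| = 1 by rewrite leq_addr.
  rewrite -cardsT; apply/eqP/cards1P; exists x; apply/setP => y; rewrite !inE.
  apply/eqP; apply: contraT => nyx.
  have /connectP [[|z p] /= pp yx] := cB x y; first by rewrite yx eqxx in nyx.
  move: pp => /andP [/andP [_ /existsP [R /existsP [t /andP [tR /andP [xt _]]]]] _].
  move: xn; rewrite /tuple_elements; case/bigcupP; exists R => //.
  by apply/bigcupP; exists t; rewrite ?inE.
rewrite -cardsT; apply: leq_trans (leq_addl _ _); apply: leq_trans card_tuple_elements.
by apply: subset_leq_card; apply/subsetP => x _; apply: contraT => xn; case: all_in; exists x.
Qed.

End StructureSize.

Lemma homs_total (sym : finType) (ar : sym -> nat) (A B : structure ar) h a :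
  h \in homs A B -> h a != None.
Proof. by rewrite inE => /existsP [f /andP [_ /eqP ->]]; rewrite ffunE. Qed.

Lemma card_homs (sym : finType) (ar : sym -> nat) (A B : structure ar) :
  #|homs A B| <= #|univ B| ^ #|univ A|.
Proof.
apply: leq_trans (_ : #|[set [ffun x => Some (f x)] | f : {ffun univ A -> univ B}]| <= _).
  apply: subset_leq_card; apply/subsetP => h; rewrite inE => /existsP [f /andP [_ /eqP ->]].
  by apply/imsetP; exists f.
by apply: leq_trans (leq_imset_card _ _) _; rewrite card_ffun.
Qed.

Definition dsize_bound (sym : finType) (ar : sym -> nat) (A : structure ar) (m : nat) : nat :=
  triv_bound ((1 + m * \sum_(R : sym) ar R) ^ #|univ A|) #|univ A|.

Lemma triv_bound_mono n n' k : n <= n' -> triv_bound n k <= triv_bound n' k.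
Proof.
move=> le_nn'; have le_gates : n * k + n.+1 <= n' * k + n'.+1 by rewrite leq_add ?leq_mul.
by rewrite leq_add // leq_sqr.
Qed.

Lemma dsize_le_bound (sym : finType) (ar : sym -> nat) (A B : structure ar) m :
  connected B -> ssize B <= m -> dsize A B <= dsize_bound A m.
Proof.
move=> cB sB; apply: leq_trans (dmin_triv (@homs_total _ _ A B)) _.
apply/triv_bound_mono/(leq_trans (card_homs A B)).
case: #|univ A| => // k; rewrite leq_exp2r //.
by apply: leq_trans (card_univ_connected cB) _; rewrite leq_add2l leq_mul2r sB orbT.
Qed.

Section Reduct.
Variables (sym : finType) (ar : sym -> nat) (U : finType) (C : structure (ar_id ar U)).

Definition reduct : structure ar := Structure (univ C) (fun R => interp C (inl R)).

Lemma connected_reduct : connected C -> connected reduct.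
Proof.
move=> cC x y; apply: connect_sub (cC x y) => u v.
move=> /andP [nuv /existsP [[R|a] /existsP [t /andP [tR /andP [ut vt]]]]].
  apply/connect1/andP; split => //.
  by apply/existsP; exists R; apply/existsP; exists t; rewrite tR ut vt.
by case: t tR ut vt nuv => [[|z [|]]] //= _ _; rewrite !inE => /eqP -> /eqP ->; rewrite eqxx.
Qed.

Lemma ssize_reduct : ssize reduct <= ssize C.
Proof. by rewrite [X in _ <= X]/ssize big_sumType /= leq_addr. Qed.

End Reduct.

Lemma homs_indiv (sym : finType) (ar : sym -> nat) (A : structure ar)
    (C : structure (ar_id ar (univ A))) :
  homs (indiv A) C = [set h in homs A (reduct C) | respects (fun a c => c \in Pset C a) h].
Proof.
have map1 (f : univ A -> univ C) a : map_tuple f [tuple a] = [tuple f a] by apply: val_inj.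
apply/setP => h; rewrite !inE; apply/existsP/andP.
  move=> [f /andP [/forallP hom /eqP hE]]; split.
    apply/existsP; exists f; rewrite hE eqxx andbT; apply/forallP => R.
    exact: (hom (inl R)).
  apply/respectsP => a b; rewrite hE ffunE => -[<-]; rewrite inE -map1.
  by move: (hom (inr a)) => /forallP /(_ [tuple a]); rewrite /= inE eqxx.
move=> [/existsP [f /andP [/forallP hom /eqP hE]] /respectsP resp].
exists f; rewrite hE eqxx andbT; apply/forallP => -[R|a]; first exact: hom R.
apply/forallP => t; apply/implyP; rewrite /= inE => /eqP ->.
by rewrite map1; move: (resp a (f a)); rewrite hE ffunE inE; apply.
Qed.

Lemma dsize_indiv (sym : finType) (ar : sym -> nat) (A : structure ar)
    (C : structure (ar_id ar (univ A))) :
  dsize (indiv A) C <= dsize A (reduct C).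
Proof.
rewrite /dsize -/(dmin _) homs_indiv; apply: dmin_respects => h a.
exact: (@homs_total _ _ A (reduct C)).
Qed.

Theorem lemma6p3 (sym : finType) (ar : sym -> nat) (A : structure ar)
  (hA : connected A) :
  big_Omega (dclass A (@all_structs sym ar))
            (dclass (indiv A) (@partition_class sym ar (univ A))).
Proof.
exists 1; split => //; exists 0 => m _; rewrite mul1n.
apply: nat_max_le => _ [C [[cC _] [sC ->]]]; apply: leq_trans (dsize_indiv C) _.
apply: (le_nat_max (u := dsize_bound A m)).
  by move=> _ [B [cB [sB ->]]]; apply: dsize_le_bound.
exists (reduct C); split; first exact: connected_reduct.
by split => //; apply: leq_trans (ssize_reduct C) sC.
Qed.
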